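(* Let $p\geq 3$ and $q\geq 6$ be integers and let $C_{p,q}$ be a double chain consisting of $p$ points of $A$ and $q$ points of $B$, in general position. Then $\mu(D(C_{p,q}))=\binom{p+q}{2}-4$.
   Context: Let $A$ be the arc of a circle that goes from $(-5,2)$ to $(5,2)$ and passes through $(0,3/2)$, and let $B$ be the reflection of $A$ in the $x$-axis; then every point of $A$ (resp. $B$) lies above (resp. below) every line spanned by two points of $B$ (resp. $A$). For integers $p,q\geq 1$, a double chain $C_{p,q}$ is a set of $p+q$ points obtained by choosing $p$ points of $A$ and $q$ points of $B$. A set of points is in general position if no three are collinear. The disjointness graph of segments $D(P)$ is the graph whose vertices are all closed straight-line segments with both endpoints in $P$, two being adjacent if and only if they are disjoint. For a graph $G$ and $U\subseteq V(G)$, two distinct vertices $x,y\in U$ are $U$-mutually visible if $G$ contains a shortest $x$-$y$ path none of whose internal vertices lies in $U$; $U$ is a mutual-visibility set if every two distinct vertices of $U$ are $U$-mutually visible. $\mu(G)$ is the maximum size of a mutual-visibility set of $G$. *)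

From HB Require Import structures.
From mathcomp Require Import all_boot all_order all_algebra.
From mathcomp Require Import reals.
Set Implicit Arguments. Unset Strict Implicit. Unset Printing Implicit Defensive.
Import Order.TTheory GRing.Theory Num.Theory.
Local Open Scope ring_scope.

Section Geometry.
Variable R : realType.
Definition point := (R * R)%type.

(* The arc A: the lower arc of the circle centred at (0, 107/4) with radius
   101/4 (the circle through (-5,2), (5,2), (0,3/2)), between x = -5 and x = 5. *)
Definition on_arcA (z : point) : Prop :=
  z.1 ^+ 2 + (z.2 - 107%:R / 4%:R) ^+ 2 = (101%:R / 4%:R) ^+ 2
  /\ - 5%:R <= z.1 <= 5%:R /\ z.2 <= 2%:R.

Definition on_arcB (z : point) : Prop := on_arcA (z.1, - z.2).

Definition collinear (a b c : point) : Prop :=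
  (b.1 - a.1) * (c.2 - a.2) - (b.2 - a.2) * (c.1 - a.1) = 0.

Definition on_seg (a b z : point) : Prop :=
  exists t : R, 0 <= t <= 1 /\ z = ((1 - t) * a.1 + t * b.1, (1 - t) * a.2 + t * b.2).
End Geometry.

Definition dc_index (p q : nat) : finType := ('I_p + 'I_q)%type.

Section DoubleChain.
Variables (R : realType) (p q : nat) (a : 'I_p -> point R) (b : 'I_q -> point R).

Definition dc_pt (i : dc_index p q) : point R :=
  match i with inl i => a i | inr j => b j end.

Definition is_double_chain : Prop :=
  injective a /\ injective b /\ (forall i, on_arcA (a i)) /\ (forall j, on_arcB (b j)).

Definition general_position : Prop :=
  forall i j k : dc_index p q, i <> j -> j <> k -> i <> k ->
    ~ collinear (dc_pt i) (dc_pt j) (dc_pt k).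

(* Vertices of D(P): segments, i.e. 2-element subsets of the point set. *)
Definition segment_v : finType := {s : {set dc_index p q} | #|s| == 2}.

Definition in_segment (s : segment_v) (z : point R) : Prop :=
  exists i j, i \in val s /\ j \in val s /\ i <> j /\ on_seg (dc_pt i) (dc_pt j) z.

Definition disj_adj (s t : segment_v) : Prop :=
  ~ exists z, in_segment s z /\ in_segment t z.
End DoubleChain.

Section Visibility.
Variables (V : finType) (adj : V -> V -> Prop).

Fixpoint is_walk (x : V) (s : seq V) : Prop :=
  match s with [::] => True | y :: s' => adj x y /\ is_walk y s' end.

(* x :: s is a shortest x-y path. *)
Definition shortest_path (x y : V) (s : seq V) : Prop :=
  is_walk x s /\ last x s = y /\
  forall s', is_walk x s' -> last x s' = y -> (size s <= size s')%N.

Definition mutually_visible (U : {set V}) (x y : V) : Prop :=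
  exists s, shortest_path x y s /\
    forall z, z \in take (size s).-1 s -> z \notin U.

Definition mutual_visibility_set (U : {set V}) : Prop :=
  forall x y, x \in U -> y \in U -> x <> y -> mutually_visible U x y.

Definition mu_eq (m : nat) : Prop :=
  (exists U, mutual_visibility_set U /\ #|U| = m) /\
  (forall U, mutual_visibility_set U -> (#|U| <= m)%N).
End Visibility.

(* Sort each arc by abscissa. A segment joining two consecutive points of one arc is disjoint
   from every segment avoiding its endpoints; we fix four such "blockers" with pairwise disjoint
   endpoint sets, one on A and three on B.
   Lower bound: the complement of the blockers is a mutual-visibility set. If two segments
   intersect, some blocker avoids all their endpoints: otherwise, the blockers being pairwise
   disjoint, the two segments would have four distinct endpoints, one on A and three on B, and
   such segments are disjoint. That blocker is a common neighbour outside the set.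
   Upper bound: if at most three segments are missing from U, there are two segments ce1, ce2 of
   U such that every missing segment touches c, e1 or e2. Some blocker avoids c, e1, e2, so their
   distance is 2, yet every common neighbour lies in U. *)

From mathcomp Require Import all_boot all_order all_algebra.
From mathcomp Require Import reals.
From mathcomp Require Import ring lra zify.
From Stdlib Require Import Classical.
Set Implicit Arguments. Unset Strict Implicit. Unset Printing Implicit Defensive.
Import Order.TTheory GRing.Theory Num.Theory.

Section FinsetCombinatorics.
Variable T : finType.
Implicit Types (X w : {set T}) (u v : T).

Lemma leq_card_meets_disjoint_family k (S : 'I_k -> {set T}) X :
  (forall m n, m != n -> [disjoint S m & S n]) -> (forall m, ~~ [disjoint S m & X]) ->
  k <= #|X|.
Proof.
move=> disS meetX.
have /fin_all_exists [f fS] : forall m, exists u, u \in S m :&: X.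
  by move=> m; apply/set0Pn; rewrite setI_eq0.
have f_inj : injective f.
  move=> m n fmn; apply/eqP/negPn/negP => /disS.
  rewrite -setI_eq0 => /eqP /setP /(_ (f m)).
  by have := fS m; have := fS n; rewrite -fmn !inE => /andP [-> _] /andP [-> _].
rewrite -[k]card_ord -(card_imset _ f_inj); apply: subset_leq_card.
by apply/subsetP => _ /imsetP [m _ ->]; have := fS m; rewrite inE => /andP [].
Qed.

Lemma subset_set3_of_card_le3 (x0 : T) (A : {set T}) :
  #|A| <= 3 -> exists x1 x2 x3, A \subset [set x1; x2; x3].
Proof.
rewrite cardE => hA; exists (nth x0 (enum A) 0), (nth x0 (enum A) 1), (nth x0 (enum A) 2).
apply/subsetP => u; rewrite -mem_enum; move: hA.
by case: (enum A) => [|u1 [|u2 [|u3 [|u4 s]]]] //= _; rewrite !inE;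
  do ?case/orP; move/eqP=> ->; rewrite eqxx ?orbT.
Qed.

Lemma subset_set3_card (S : {set T}) (x1 x2 x3 : T) :
  S \subset [set x1; x2; x3] -> 2 < #|S| -> S = [set x1; x2; x3] /\ uniq [:: x1; x2; x3].
Proof.
move=> sub S3; have le3 : #|[set x1; x2; x3]| <= 3.
  by rewrite -setUA cardsU1 cards2; case: (_ \notin _); case: (_ != _).
have eqS : S = [set x1; x2; x3] by apply/eqP; rewrite eqEcard sub (leq_trans le3 S3).
split=> //; move: S3; rewrite eqS -setUA cardsU1 cards2 /= !inE negb_or andbT.
by case: (_ && _); case: (x2 != x3).
Qed.

Definition cherry_for (ws : seq {set T}) (c e1 e2 : T) :=
  [/\ c != e1, c != e2, e1 != e2 &
      {in ws, forall w, [/\ w != [set c; e1], w != [set c; e2] &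
                           ~~ [disjoint w & [set c; e1; e2]]]}].

Lemma neq_set2 w u v : (u \notin w) || (v \notin w) -> w != [set u; v].
Proof. by move=> h; apply/eqP => E; move: h; rewrite E !inE !eqxx orbT. Qed.

Lemma meets_of_mem (A B : {set T}) u : u \in A -> u \in B -> ~~ [disjoint A & B].
Proof. by move=> uA uB; apply/negP => d; rewrite (disjointFr d uA) in uB. Qed.

Section Cherry.
Variables w1 w2 w3 : {set T}.
Hypotheses (c1 : #|w1| = 2) (c2 : #|w2| = 2) (c3 : #|w3| = 2).
Local Notation X := (w1 :|: w2 :|: w3).

Lemma mem_setU3 w u : w \in [:: w1; w2; w3] -> u \in w -> u \in X.
Proof. by rewrite !inE => /or3P [] /eqP -> hu; rewrite hu ?orbT. Qed.

(* The centre is taken outside every [w], so neither segment of the cherry is a [w]. *)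
Lemma cherry_of_hitting_pair u v : 6 < #|T| -> u \in X -> v \in X -> u != v ->
  {in [:: w1; w2; w3], forall w, (u \in w) || (v \in w)} ->
  exists c e1 e2, cherry_for [:: w1; w2; w3] c e1 e2.
Proof.
move=> hT uX vX uv huv.
have [f fX] : exists f, f \notin X.
  apply/existsP; rewrite -negb_forall; apply/negP => /forallP allX.
  have : #|T| <= #|X| by rewrite -cardsT subset_leq_card //; apply/subsetP => x _; exact: allX.
  by rewrite !cardsU c1 c2 c3; lia.
exists f, u, v; split; [by apply: contraNneq fX => -> | by apply: contraNneq fX => -> | done |].
move=> w hw; have fw : f \notin w by apply: contra fX; exact: mem_setU3.
split; rewrite ?neq_set2 ?fw //; case/orP: (huv w hw) => h.
- by apply: (meets_of_mem h); rewrite !inE eqxx orbT.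
- by apply: (meets_of_mem h); rewrite !inE eqxx !orbT.
Qed.

Lemma cherry_of_pairwise_disjoint :
  [disjoint w1 & w2] -> [disjoint w1 & w3] -> [disjoint w2 & w3] ->
  exists c e1 e2, cherry_for [:: w1; w2; w3] c e1 e2.
Proof.
move=> d12 d13 d23.
have elt w : #|w| = 2 -> exists u, u \in w by move=> cw; apply/set0Pn; rewrite -card_gt0 cw.
have [[c cw1] [e1 ew2] [e2 ew3]] := And3 (elt _ c1) (elt _ c2) (elt _ c3).
exists c, e1, e2; split.
- by apply: contraTneq cw1 => ->; rewrite (disjointFl d12 ew2).
- by apply: contraTneq cw1 => ->; rewrite (disjointFl d13 ew3).
- by apply: contraTneq ew2 => ->; rewrite (disjointFl d23 ew3).
move=> w; rewrite !inE => /or3P [] /eqP ->.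
- split; rewrite ?neq_set2 ?(disjointFl d12 ew2) ?(disjointFl d13 ew3) ?orbT //.
  by apply: (meets_of_mem cw1); rewrite !inE eqxx.
- split; rewrite ?neq_set2 ?(disjointFr d12 cw1) //.
  by apply: (meets_of_mem ew2); rewrite !inE eqxx orbT.
- split; rewrite ?neq_set2 ?(disjointFr d13 cw1) //.
  by apply: (meets_of_mem ew3); rewrite !inE eqxx !orbT.
Qed.

Lemma exists_cherry : 6 < #|T| -> exists c e1 e2, cherry_for [:: w1; w2; w3] c e1 e2.
Proof.
move=> hT.
have other w v : #|w| = 2 -> exists2 u, u \in w & u != v.
  move/eqP/cards2P => [x [y [xy ->]]]; have [<-|xv] := eqVneq x v.
    by exists y; rewrite ?inE ?eqxx ?orbT // eq_sym.
  by exists x; rewrite ?inE ?eqxx.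
have shared wa wb wc : {subset [:: w1; w2; w3] <= [:: wa; wb; wc]} ->
    wa \in [:: w1; w2; w3] -> wc \in [:: w1; w2; w3] -> #|wc| = 2 ->
    ~~ [disjoint wa & wb] -> exists c e1 e2, cherry_for [:: w1; w2; w3] c e1 e2.
  move=> sw wa3 wc3 cc; rewrite -setI_eq0 => /set0Pn [v]; rewrite inE => /andP [va vb].
  have [u uc uv] := other wc v cc.
  apply: (cherry_of_hitting_pair hT (mem_setU3 wc3 uc) (mem_setU3 wa3 va) uv).
  by move=> w /sw; rewrite !inE => /or3P [] /eqP ->; rewrite ?va ?vb ?uc ?orbT.
have [d12|] := boolP [disjoint w1 & w2]; last first.
  by apply: (shared w1 w2 w3); rewrite ?inE ?eqxx ?orbT.
have [d13|] := boolP [disjoint w1 & w3]; last first.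
  apply: (shared w1 w3 w2); rewrite ?inE ?eqxx ?orbT //.
  by move=> w; rewrite !inE; case/or3P => ->; rewrite ?orbT.
have [d23|] := boolP [disjoint w2 & w3]; last first.
  apply: (shared w2 w3 w1); rewrite ?inE ?eqxx ?orbT //.
  by move=> w; rewrite !inE; case/or3P => ->; rewrite ?orbT.
exact: cherry_of_pairwise_disjoint.
Qed.
End Cherry.
End FinsetCombinatorics.

Section SortedByKey.
Local Open Scope order_scope.
Variables (disp : Order.disp_t) (R : orderType disp) (I : finType) (f : I -> R) (i0 : I).
Hypothesis f_inj : injective f.

Definition nth_sorted_by (k : nat) : I := nth i0 (sort (relpre f <=%O) (enum I)) k.

Lemma size_sort_enum : size (sort (relpre f <=%O) (enum I)) = #|I|.
Proof. by rewrite size_sort cardE. Qed.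

Lemma nth_sorted_by_le k l : (k <= l)%N -> (l < #|I|)%N ->
  f (nth_sorted_by k) <= f (nth_sorted_by l).
Proof.
move=> kl lI.
have sorted_s : sorted (relpre f <=%O) (sort (relpre f <=%O) (enum I)).
  by apply: sort_sorted => i j; exact: le_total.
apply: (sorted_leq_nth _ _ i0 sorted_s); rewrite ?inE ?size_sort_enum //.
- by move=> j i h /=; exact: le_trans.
- by move=> i /=.
- exact: leq_ltn_trans kl lI.
Qed.

Lemma nth_sorted_by_lt k l : (k < l)%N -> (l < #|I|)%N ->
  f (nth_sorted_by k) < f (nth_sorted_by l).
Proof.
move=> kl lI; rewrite lt_neqAle nth_sorted_by_le ?(ltnW kl) // andbT inj_eq //.
by rewrite nth_uniq ?size_sort_enum ?sort_uniq ?enum_uniq ?neq_ltn ?kl //; exact: ltn_trans kl lI.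
Qed.

Lemma nth_sorted_by_gap k j : (k.+1 < #|I|)%N ->
  j != nth_sorted_by k -> j != nth_sorted_by k.+1 ->
  f j < f (nth_sorted_by k) \/ f (nth_sorted_by k.+1) < f j.
Proof.
move=> kI; have mI : (index j (sort (relpre f <=%O) (enum I)) < #|I|)%N.
  by rewrite -size_sort_enum index_mem mem_sort mem_enum.
have <- : nth_sorted_by (index j (sort (relpre f <=%O) (enum I))) = j.
  by rewrite /nth_sorted_by nth_index // mem_sort mem_enum.
move: (index _ _) mI => m mI mk mk1.
have [km|mk'] := ltnP k m.
  by right; apply: nth_sorted_by_lt => //; rewrite ltn_neqAle km andbT; apply: contraNneq mk1 => ->.
left; apply: nth_sorted_by_lt (ltnW kI).
by rewrite ltn_neqAle mk' andbT; apply: contraNneq mk => ->.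
Qed.
End SortedByKey.

Section ShortestPaths.
Variables (V : finType) (adj : V -> V -> Prop).

Lemma shortest_path_edge x y : x <> y -> adj x y -> shortest_path adj x y [:: y].
Proof. by move=> xy hxy; do !split => //; case=> // _ /= /xy. Qed.

Lemma shortest_path_common_neighbour x y w : x <> y -> ~ adj x y -> adj x w -> adj w y ->
  shortest_path adj x y [:: w; y].
Proof.
move=> xy nxy xw wy; do !split => //.
by case=> [|z [|z' s]] //= [+ _] => + zy; rewrite zy.
Qed.

Lemma shortest_path_dist2 x y w s : x <> y -> ~ adj x y -> adj x w -> adj w y ->
  shortest_path adj x y s -> exists z, [/\ s = [:: z; y], adj x z & adj z y].
Proof.
move=> xy nxy xw wy [walk [last_s min_s]].
have := min_s [:: w; y] (conj xw (conj wy I)) erefl.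
case: s walk last_s {min_s} => [|z [|z' [|? ?]]] //=.
- by move=> [xz _] zy; rewrite zy in xz.
- by move=> [xz [zy _]] <- _; exists z.
Qed.
End ShortestPaths.

Local Open Scope ring_scope.

Section Orientation.
Variable R : realType.
Implicit Types P Q U V X z : point R.

Definition orient P Q X := (Q.1 - P.1) * (X.2 - P.2) - (Q.2 - P.2) * (X.1 - P.1).

Lemma orient_rotate P Q X : orient P Q X = orient Q X P.
Proof. rewrite /orient; ring. Qed.

Lemma orient_swap P Q X : orient Q P X = - orient P Q X.
Proof. rewrite /orient; ring. Qed.

Lemma on_seg_sym P Q z : on_seg P Q z -> on_seg Q P z.
Proof.
case=> t [/andP [t0 t1] ->]; exists (1 - t); split; first by apply/andP; split; lra.
by congr (_, _); ring.
Qed.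

Lemma on_seg_left P Q : on_seg P Q P.
Proof. by exists 0; rewrite lexx ler01 subr0 !mul1r !mul0r !addr0; case: P. Qed.

Lemma on_seg_orient P Q z : on_seg P Q z -> orient P Q z = 0.
Proof. by case=> t [_ ->]; rewrite /orient /=; ring. Qed.

Lemma orient_on_seg P Q U V t :
  orient P Q ((1 - t) * U.1 + t * V.1, (1 - t) * U.2 + t * V.2) =
  (1 - t) * orient P Q U + t * orient P Q V.
Proof. rewrite /orient /=; ring. Qed.

Lemma on_seg_meet_orient P Q U V z : on_seg P Q z -> on_seg U V z ->
  orient P Q U * orient P Q V <= 0.
Proof.
move=> /on_seg_orient hz [t [/andP [t0 t1] ez]]; move: hz.
rewrite ez orient_on_seg; move: (orient P Q U) (orient P Q V) => u v h.
have e : t * (u * v) + (1 - t) * u ^+ 2 = 0 by rewrite -(mulr0 u) -h; ring.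
have [t_eq0|t_neq0] := eqVneq t 0.
  by move: h; rewrite t_eq0 subr0 mul1r mul0r addr0 => ->; rewrite mul0r.
have t_gt0 : 0 < t by rewrite lt_def t_neq0.
nra.
Qed.

Definition refl z : point R := (z.1, - z.2).

Lemma orient_refl P Q X : orient (refl P) (refl Q) (refl X) = - orient P Q X.
Proof. rewrite /orient /refl /=; ring. Qed.

Lemma on_seg_refl P Q z : on_seg P Q z -> on_seg (refl P) (refl Q) (refl z).
Proof. by case=> t [ht ->]; exists t; split => //; rewrite /refl /=; congr (_, _); ring. Qed.

End Orientation.

Section Arcs.
Variable R : realType.
Implicit Types P Q M X z : point R.
Local Notation center := (107%:R / 4%:R : R).
Local Notation radius := (101%:R / 4%:R : R).

Lemma on_arcB_refl z : on_arcB z -> on_arcA (refl z).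
Proof. by []. Qed.

Lemma on_arcA_refl z : on_arcA z -> on_arcB (refl z).
Proof. by rewrite /on_arcB /refl /= opprK; case: z. Qed.

Lemma arcA_x z : on_arcA z -> - 5%:R <= z.1 <= 5%:R.
Proof. by case=> _ []. Qed.

Lemma arcA_y z : on_arcA z -> 3%:R / 2%:R <= z.2 <= 2%:R.
Proof. by case=> e [/andP [x1 x2] ->]; rewrite andbT; rewrite !expr2 in e; nra. Qed.

Lemma arcA_x_inj P Q : on_arcA P -> on_arcA Q -> P.1 = Q.1 -> P = Q.
Proof.
move=> hP hQ ex; move: (arcA_y hP) (arcA_y hQ) => /andP [p1 p2] /andP [q1 q2].
case: hP hQ => eP _ [eQ _].
have : (P.2 - Q.2) * (P.2 + Q.2 - 2%:R * center) = 0.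
  rewrite -(subrr (radius ^+ 2)) -{1}eP -eQ ex; ring.
move/eqP; rewrite mulf_eq0 => /orP [/eqP h|/eqP h]; last by exfalso; lra.
by move: ex h; case: P {eP p1 p2} => x y; case: Q {eQ q1 q2} => x' y' /= -> h; congr (_, _); lra.
Qed.

Lemma orient_arcA_between P M Q : on_arcA P -> on_arcA M -> on_arcA Q ->
  P.1 < M.1 < Q.1 -> orient P Q M < 0.
Proof.
move=> hP hM hQ /andP [pm mq]; have /andP [_ m2] := arcA_y hM.
case: hP hQ hM => eP _ [eQ _] [eM _].
set D := Q.1 - P.1; set al := M.1 - P.1; set be := Q.1 - M.1.
have Dp : 0 < D by rewrite subr_gt0; exact: lt_trans mq.
have alp : 0 < al by rewrite subr_gt0.
have bep : 0 < be by rewrite subr_gt0.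
(* [(M.1, Zy)] is the point of the chord PQ above M; it lies strictly inside the circle. *)
set Zy := (be * P.2 + al * Q.2) / D.
have D0 : D != 0 by rewrite gt_eqF.
have inside : M.1 ^+ 2 + (Zy - center) ^+ 2 - radius ^+ 2 =
    - (al * be / D ^+ 2 * (D ^+ 2 + (Q.2 - P.2) ^+ 2)).
  have -> : M.1 ^+ 2 + (Zy - center) ^+ 2 - radius ^+ 2 =
      (be * (P.1 ^+ 2 + (P.2 - center) ^+ 2 - radius ^+ 2)
       + al * (Q.1 ^+ 2 + (Q.2 - center) ^+ 2 - radius ^+ 2)) / D
      - al * be / D ^+ 2 * (D ^+ 2 + (Q.2 - P.2) ^+ 2).
    by rewrite /Zy /al /be /D; field; rewrite -/D.
  by rewrite eP eQ !subrr !mulr0 addr0 mul0r sub0r.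
have pos : 0 < al * be / D ^+ 2 * (D ^+ 2 + (Q.2 - P.2) ^+ 2).
  apply: mulr_gt0; first by rewrite divr_gt0 ?mulr_gt0 ?exprn_gt0.
  by apply: ltr_wpDr; [exact: sqr_ge0 | exact: exprn_gt0].
have zy : M.2 < Zy.
  have : (Zy - center) ^+ 2 < (M.2 - center) ^+ 2 by lra.
  by rewrite !expr2; nra.
have -> : orient P Q M = D * (M.2 - Zy).
  by rewrite /orient /Zy /al /be /D; field; rewrite -/D.
by rewrite pmulr_rlt0 // subr_lt0.
Qed.

Lemma orient_arcA_outside P Q M : on_arcA P -> on_arcA Q -> on_arcA M ->
  P.1 < Q.1 -> M.1 < P.1 \/ Q.1 < M.1 -> 0 < orient P Q M.
Proof.
move=> hP hQ hM pq [mp|qm].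
  have := orient_arcA_between hM hP hQ (introT andP (conj mp pq)).
  by rewrite orient_rotate orient_swap; lra.
have := orient_arcA_between hP hQ hM (introT andP (conj pq qm)).
by rewrite orient_swap orient_rotate orient_swap; lra.
Qed.

Lemma orient_arcA_arcB P Q X : on_arcA P -> on_arcA Q -> on_arcB X -> P.1 < Q.1 ->
  orient P Q X < 0.
Proof.
move=> hP hQ hX pq.
move: (arcA_y hP) (arcA_y hQ) (arcA_y hX) (arcA_x hP) (arcA_x hQ) (arcA_x hX) => /=.
move=> /andP [p1 p2] /andP [q1 q2] /andP [x1 x2] /andP [px1 px2] /andP [qx1 qx2] /andP [xx1 xx2].
case: hP hQ => eP _ [eQ _].
(* The chord has slope (Q.1 + P.1) / w with w >= 99/2, and X lies at least 3 below it. *)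
set w := 2%:R * center - Q.2 - P.2.
have e : (Q.2 - P.2) * w = (Q.1 - P.1) * (Q.1 + P.1).
  apply/eqP; rewrite -subr_eq0; apply/eqP.
  transitivity ((P.1 ^+ 2 + (P.2 - center) ^+ 2) - (Q.1 ^+ 2 + (Q.2 - center) ^+ 2)).
    by rewrite /w; ring.
  by rewrite eP eQ subrr.
have wp : 99%:R / 2%:R <= w by rewrite /w; lra.
have below : w * (X.2 - P.2) - (Q.1 + P.1) * (X.1 - P.1) < 0.
  have h1 : w * (X.2 - P.2) <= - (99%:R / 2%:R) * 3%:R by nra.
  have h2 : - 100%:R <= (Q.1 + P.1) * (X.1 - P.1) by nra.
  lra.
have : w * orient P Q X = (Q.1 - P.1) * (w * (X.2 - P.2) - (Q.1 + P.1) * (X.1 - P.1)).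
  by rewrite /orient mulrBr [w * ((Q.2 - P.2) * _)]mulrA [w * _]mulrC e; ring.
have D : 0 < Q.1 - P.1 by rewrite subr_gt0.
move=> h; have : w * orient P Q X < 0 by rewrite h pmulr_rlt0.
by rewrite pmulr_rlt0 //; lra.
Qed.
End Arcs.

Section ChainGeometry.
Variable R : realType.
Implicit Types P Q M K L X U V z : point R.

Lemma arcB_x_inj P Q : on_arcB P -> on_arcB Q -> P.1 = Q.1 -> P = Q.
Proof.
move=> hP hQ e; have := arcA_x_inj (on_arcB_refl hP) (on_arcB_refl hQ) e.
by case: P Q {hP hQ} e => x y [x' y'] /= -> [/oppr_inj ->].
Qed.

Lemma orient_arcB_between P M Q : on_arcB P -> on_arcB M -> on_arcB Q ->
  P.1 < M.1 < Q.1 -> 0 < orient P Q M.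
Proof.
move=> hP hM hQ h.
have := orient_arcA_between (on_arcB_refl hP) (on_arcB_refl hM) (on_arcB_refl hQ) h.
by rewrite orient_refl oppr_lt0.
Qed.

Lemma orient_arcB_outside P Q M : on_arcB P -> on_arcB Q -> on_arcB M ->
  P.1 < Q.1 -> M.1 < P.1 \/ Q.1 < M.1 -> orient P Q M < 0.
Proof.
move=> hP hQ hM pq h.
have := orient_arcA_outside (on_arcB_refl hP) (on_arcB_refl hQ) (on_arcB_refl hM) pq h.
by rewrite orient_refl oppr_gt0.
Qed.

Lemma orient_arcB_arcA P Q X : on_arcB P -> on_arcB Q -> on_arcA X -> P.1 < Q.1 ->
  0 < orient P Q X.
Proof.
move=> hP hQ hX pq.
have := orient_arcA_arcB (on_arcB_refl hP) (on_arcB_refl hQ) (on_arcA_refl hX) pq.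
by rewrite orient_refl oppr_lt0.
Qed.

Lemma same_side_no_meet P Q U V z : 0 < orient P Q U * orient P Q V ->
  on_seg P Q z -> on_seg U V z -> False.
Proof. by move=> h sPQ sUV; have := on_seg_meet_orient sPQ sUV; rewrite leNgt h. Qed.

Lemma seg_arcA_arcB_no_meet X L K M z : on_arcA X -> on_arcB L -> on_arcB K -> on_arcB M ->
  L.1 != K.1 -> L.1 != M.1 -> K.1 != M.1 -> on_seg X L z -> on_seg K M z -> False.
Proof.
move=> hX hL hK hM lk lm km.
wlog {km} km : K M hK hM lk lm / K.1 < M.1.
  move=> W sXL sKM; case: (ltgtP K.1 M.1) km => // [km|mk] _; first exact: W sKM.
  exact: W (on_seg_sym sKM).
move=> sXL sKM; case: (ltgtP L.1 K.1) lk => // [lk|kl] _.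
  apply: (same_side_no_meet _ sXL sKM); rewrite !(orient_rotate X L).
  by rewrite mulr_gt0 ?orient_arcB_arcA //; exact: lt_trans km.
case: (ltgtP L.1 M.1) lm => // [lm|ml] _.
  apply: (same_side_no_meet _ sKM (on_seg_sym sXL)).
  by apply: mulr_gt0; [apply: orient_arcB_between; rewrite ?kl | exact: orient_arcB_arcA].
apply: (same_side_no_meet _ sXL sKM); rewrite !(orient_rotate X L) !(orient_swap _ L) mulrNN.
by rewrite mulr_gt0 ?orient_arcB_arcA //; exact: lt_trans ml.
Qed.

Definition beside_chordB P Q X := on_arcA X \/ on_arcB X /\ (X.1 < P.1 \/ Q.1 < X.1).
Definition beside_chordA P Q X := on_arcB X \/ on_arcA X /\ (X.1 < P.1 \/ Q.1 < X.1).

Lemma chordB_no_meet P Q U V z : on_arcB P -> on_arcB Q -> P.1 < Q.1 ->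
  beside_chordB P Q U -> beside_chordB P Q V -> on_seg P Q z -> on_seg U V z -> False.
Proof.
move=> hP hQ pq.
have mixed X Y : on_arcA X -> on_arcB Y -> Y.1 < P.1 \/ Q.1 < Y.1 ->
    on_seg P Q z -> on_seg X Y z -> False.
  move=> hX hY hYx sPQ sXY; apply: (seg_arcA_arcB_no_meet hX hY hP hQ _ _ _ sXY sPQ).
  - by case: hYx => h; [rewrite lt_eqF | rewrite gt_eqF // (lt_trans pq h)].
  - by case: hYx => h; [rewrite lt_eqF // (lt_trans h pq) | rewrite gt_eqF].
  - by rewrite lt_eqF.
case=> [hU|[hU hUx]] [hV|[hV hVx]] sPQ sUV.
- by apply: (same_side_no_meet _ sPQ sUV); rewrite mulr_gt0 ?orient_arcB_arcA.
- exact: mixed hU hV hVx sPQ sUV.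
- exact: mixed hV hU hUx sPQ (on_seg_sym sUV).
- apply: (same_side_no_meet _ sPQ sUV); rewrite -mulrNN mulr_gt0 // oppr_gt0.
  + exact: orient_arcB_outside.
  + exact: orient_arcB_outside.
Qed.

Lemma chordA_no_meet P Q U V z : on_arcA P -> on_arcA Q -> P.1 < Q.1 ->
  beside_chordA P Q U -> beside_chordA P Q V -> on_seg P Q z -> on_seg U V z -> False.
Proof.
move=> hP hQ pq hU hV sPQ sUV.
have beside X : beside_chordA P Q X -> beside_chordB (refl P) (refl Q) (refl X).
  by case=> [h|[h hx]]; [left; exact: on_arcB_refl | right; split => //; exact: on_arcA_refl].
exact: chordB_no_meet (on_arcA_refl hP) (on_arcA_refl hQ) pq (beside _ hU) (beside _ hV)
  (on_seg_refl sPQ) (on_seg_refl sUV).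
Qed.
End ChainGeometry.

Section DoubleChainSegments.
Variable R : realType.
Variables (p q : nat) (a : 'I_p -> point R) (b : 'I_q -> point R).
Hypothesis chain : is_double_chain a b.

Local Notation T := (dc_index p q).
Local Notation seg := (segment_v p q).
Local Notation pt := (dc_pt a b).
Local Notation adj := (disj_adj a b).

Lemma a_on_arcA i : on_arcA (a i). Proof. by case: chain => _ [_ []]. Qed.
Lemma b_on_arcB j : on_arcB (b j). Proof. by case: chain => _ [_ []]. Qed.

Definition xa i := (a i).1.
Definition xb j := (b j).1.

Lemma xa_inj : injective xa.
Proof. by case: chain => a_inj _ i j /(arcA_x_inj (a_on_arcA i) (a_on_arcA j)) /a_inj. Qed.

Lemma xb_inj : injective xb.
Proof. by case: chain => _ [b_inj _] i j /(arcB_x_inj (b_on_arcB i) (b_on_arcB j)) /b_inj. Qed.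

Lemma seg_set2 (s : seg) : exists u v, u != v /\ val s = [set u; v].
Proof. exact/cards2P/(valP s). Qed.

Lemma in_segment_set2 (s : seg) u v z : val s = [set u; v] -> in_segment a b s z ->
  on_seg (pt u) (pt v) z.
Proof.
move=> hs [u' [v' [hu [hv [uv h]]]]]; move: hu hv uv h; rewrite hs !inE.
by case/orP => /eqP ->; case/orP => /eqP -> uv //; move/on_seg_sym.
Qed.

Lemma adj_of_no_meet (s t : seg) u v u' v' : val s = [set u; v] -> val t = [set u'; v'] ->
  (forall z, on_seg (pt u) (pt v) z -> on_seg (pt u') (pt v') z -> False) -> adj s t.
Proof.
by move=> hs ht H [z [/(in_segment_set2 hs) h1 /(in_segment_set2 ht) h2]]; exact: H h1 h2.
Qed.

Lemma card_segment_v : #|seg| = 'C(p + q, 2).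
Proof.
rewrite card_sig; have := card_draws T 2; rewrite card_sum !card_ord => <-.
by apply: eq_card => s; rewrite !inE.
Qed.

Lemma cards2_neq (u v : T) : u != v -> #|[set u; v]| == 2.
Proof. by rewrite cards2 => ->. Qed.

Definition seg_of (u v : T) (uv : u != v) : seg := Sub [set u; v] (cards2_neq uv).

Lemma adj_sym (s t : seg) : adj s t -> adj t s.
Proof. by move=> H [z [h1 h2]]; apply: H; exists z. Qed.

Lemma in_segment_endpoint (w : seg) u : u \in val w -> in_segment a b w (pt u).
Proof.
have [x [y [xy hw]]] := seg_set2 w; rewrite hw !inE => /orP [] /eqP ->.
- by exists x, y; rewrite hw !inE !eqxx orbT; do 3!split => //; [exact/eqP | exact: on_seg_left].
- exists y, x; rewrite hw !inE !eqxx orbT; do 3!split => //; last exact: on_seg_left.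
  by apply/eqP; rewrite eq_sym.
Qed.

Lemma not_adj_of_common (s t : seg) u : u \in val s -> u \in val t -> ~ adj s t.
Proof. by move=> us ut; apply; exists (pt u); split; exact: in_segment_endpoint. Qed.

Lemma adj_arcA_arcB_arcB (s t : seg) i j k l :
  val s = [set inl i; inr j] -> val t = [set inr k; inr l] -> j != k -> j != l -> k != l ->
  adj s t.
Proof.
have neq_x j1 j2 : j1 != j2 -> (b j1).1 != (b j2).1.
  by apply: contra => /eqP /xb_inj ->.
move=> hs ht jk jl kl; apply: (adj_of_no_meet hs ht) => z.
exact: seg_arcA_arcB_no_meet (a_on_arcA i) (b_on_arcB j) (b_on_arcB k) (b_on_arcB l)
  (neq_x _ _ jk) (neq_x _ _ jl) (neq_x _ _ kl).
Qed.

(* The hypotheses force four distinct endpoints, one on A and three on B. *)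
Lemma adj_of_one_arcA (x y : seg) i : inl i \in val x :|: val y ->
  (2 < #|[set u in val x :|: val y | ~~ is_inl u]|)%N -> adj x y.
Proof.
wlog ix : x y / inl i \in val x.
  move=> W hX hB; have /setUP [ix | iy] := hX; first exact: W.
  by apply/adj_sym/W; rewrite // setUC.
move=> _ hB; have [v hx] : exists v, val x = [set inl i; v].
  have [u [v [_ hx]]] := seg_set2 x; rewrite hx !inE in ix.
  by case/orP: ix => /eqP ->; [exists v | exists u; rewrite setUC].
have [k [l [_ hy]]] := seg_set2 y; move: hB; rewrite hx hy => hB.
have /subset_set3_card /(_ hB) [eqS] : [set u in [set inl i; v] :|: [set k; l] | ~~ is_inl u]
    \subset [set v; k; l].
  by apply/subsetP => u; rewrite !inE -!orbA => /andP [/or4P [] /eqP -> //]; rewrite eqxx ?orbT.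
have inS u : u \in [set v; k; l] -> ~~ is_inl u by rewrite -eqS inE => /andP [].
move: (inS v) (inS k) (inS l); rewrite !inE !eqxx ?orbT /= => /(_ isT) + /(_ isT) + /(_ isT).
clear hB eqS inS; case: v hx => // j hx _; case: k hy => // k hy _; case: l hy => // l hy _.
rewrite /= andbT !inE negb_or => /andP [/andP [jk jl] kl].
exact: adj_arcA_arcB_arcB hx hy jk jl kl.
Qed.

Hypotheses (p_gt1 : (1 < p)%N) (q_gt5 : (5 < q)%N).

Definition gA k := nth_sorted_by xa (Ordinal (ltnW p_gt1)) k.
Definition gB k := nth_sorted_by xb (Ordinal (ltn_trans (isT : (0 < 5)%N) q_gt5)) k.

Lemma gA_lt k l : (k < l)%N -> (l < p)%N -> xa (gA k) < xa (gA l).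
Proof. by move=> kl lp; apply: (nth_sorted_by_lt _ xa_inj kl); rewrite card_ord. Qed.

Lemma gB_lt k l : (k < l)%N -> (l < q)%N -> xb (gB k) < xb (gB l).
Proof. by move=> kl lq; apply: (nth_sorted_by_lt _ xb_inj kl); rewrite card_ord. Qed.

Lemma neq_gB k l : (k < l)%N -> (l < q)%N -> (inr (gB k) : T) != inr (gB l).
Proof. by move=> kl lq; apply/eqP => -[e]; have := gB_lt kl lq; rewrite e ltxx. Qed.

Definition chordA k : {set T} := [set inl (gA k); inl (gA k.+1)].
Definition chordB k : {set T} := [set inr (gB k); inr (gB k.+1)].

Lemma beside_chordA_pt k u : (k.+1 < p)%N -> u \notin chordA k ->
  beside_chordA (a (gA k)) (a (gA k.+1)) (pt u).
Proof.
move=> kp; case: u => [i|j] /=; last by left; exact: b_on_arcB.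
rewrite !inE negb_or => /andP [ik ik1]; right; split; first exact: a_on_arcA.
by apply: (nth_sorted_by_gap xa_inj); rewrite ?card_ord.
Qed.

Lemma beside_chordB_pt k u : (k.+1 < q)%N -> u \notin chordB k ->
  beside_chordB (b (gB k)) (b (gB k.+1)) (pt u).
Proof.
move=> kq; case: u => [i|j] /=; first by left; exact: a_on_arcA.
rewrite !inE negb_or => /andP [jk jk1]; right; split; first exact: b_on_arcB.
by apply: (nth_sorted_by_gap xb_inj); rewrite ?card_ord.
Qed.

Lemma adj_chordA k (w s : seg) : (k.+1 < p)%N -> val w = chordA k ->
  [disjoint val w & val s] -> adj w s.
Proof.
move=> kp hw ws; have [u [v [uv hs]]] := seg_set2 s; apply: (adj_of_no_meet hw hs) => z.
apply: chordA_no_meet (a_on_arcA _) (a_on_arcA _) (gA_lt (ltnSn k) kp) _ _;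
  apply: beside_chordA_pt => //; by rewrite -hw (disjointFl ws) // hs !inE eqxx ?orbT.
Qed.

Lemma adj_chordB k (w s : seg) : (k.+1 < q)%N -> val w = chordB k ->
  [disjoint val w & val s] -> adj w s.
Proof.
move=> kq hw ws; have [u [v [uv hs]]] := seg_set2 s; apply: (adj_of_no_meet hw hs) => z.
apply: chordB_no_meet (b_on_arcB _) (b_on_arcB _) (gB_lt (ltnSn k) kq) _ _;
  apply: beside_chordB_pt => //; by rewrite -hw (disjointFl ws) // hs !inE eqxx ?orbT.
Qed.

Definition blocker_set (m : 'I_4) : {set T} := if val m is n.+1 then chordB n.*2 else chordA 0.

Lemma card_blocker_set m : #|blocker_set m| == 2.
Proof.
rewrite /blocker_set; case: m => [[|n] /= hn].
  suff neqA : (inl (gA 0) : T) != inl (gA 1) by rewrite cards2 neqA.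
  by apply/eqP => -[e]; have := gA_lt (ltnSn 0) p_gt1; rewrite e ltxx.
by rewrite cards2 neq_gB //; apply: leq_trans q_gt5; lia.
Qed.

Definition blocker m : seg := Sub (blocker_set m) (card_blocker_set m).

Lemma adj_blocker m (s : seg) : [disjoint blocker_set m & val s] -> adj (blocker m) s.
Proof.
case: m => [[|n] hn] d; first exact: (@adj_chordA 0 (blocker (Ordinal hn)) s p_gt1 erefl d).
apply: (@adj_chordB n.*2 (blocker (Ordinal hn)) s _ erefl d).
by apply: leq_trans q_gt5; lia.
Qed.

Lemma disjoint_blocker_set m n : m != n -> [disjoint blocker_set m & blocker_set n].
Proof.
wlog mn : m n / (m < n)%N.
  move=> W; rewrite neq_ltn => /orP [mn|nm]; first by apply: W; rewrite // neq_ltn mn.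
  by rewrite disjoint_sym; apply: W; rewrite // neq_ltn nm.
move=> _; case: m n mn => [[|m] hm] [[|n] hn] //= mn.
  by rewrite -setI_eq0; apply/eqP/setP => u; rewrite !inE; case: u => ? /=; rewrite ?orbF ?andbF.
rewrite -setI_eq0; apply/eqP/setP => u; rewrite !inE.
have ne k l : (k < l)%N -> (l < 6)%N -> (inr (gB k) : T) != inr (gB l).
  by move=> kl l6; apply: neq_gB kl (leq_trans l6 q_gt5).
by apply/negP => /andP [/orP [] /eqP -> /orP [] /eqP /eqP]; apply/negP/ne; lia.
Qed.

Lemma blocker_set0 u : u \in blocker_set ord0 -> is_inl u.
Proof. by rewrite !inE => /orP [] /eqP ->. Qed.

Lemma blocker_set_lift m u : u \in blocker_set (lift ord0 m) -> ~~ is_inl u.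
Proof. by rewrite /blocker_set /= !inE => /orP [] /eqP ->. Qed.

Lemma exists_blocker_disjoint (x y : seg) : ~ adj x y ->
  exists m, [disjoint blocker_set m & val x :|: val y].
Proof.
move=> nxy; apply/existsP; apply: contra_notT nxy => /existsPn meets.
have := meets ord0; rewrite -setI_eq0 => /set0Pn [u /setIP [u0 uX]].
case: u u0 uX => [i _ iX|j /blocker_set0 //]; apply: (adj_of_one_arcA iX).
apply: (@leq_card_meets_disjoint_family _ _ (fun m => blocker_set (lift ord0 m))).
  by move=> m n mn; apply: disjoint_blocker_set; rewrite (inj_eq (@lift_inj _ ord0)).
move=> m; have := meets (lift ord0 m); rewrite -setI_eq0 => /set0Pn [u /setIP [um uX]].
by apply: (meets_of_mem um); rewrite inE uX (blocker_set_lift um).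
Qed.

Lemma exists_blocker_disjoint_card3 (X : {set T}) : (#|X| <= 3)%N ->
  exists m, [disjoint blocker_set m & X].
Proof.
move=> X3; apply/existsP; apply: contraTT X3 => /existsPn meets.
by rewrite -ltnNge; exact: leq_card_meets_disjoint_family disjoint_blocker_set meets.
Qed.

Lemma blocker_inj : injective blocker.
Proof.
move=> m n /(congr1 val) /= e; case: (eqVneq m n) => // /disjoint_blocker_set.
have [u un] : exists u, u \in blocker_set n.
  by apply/set0Pn; rewrite -card_gt0 (eqP (card_blocker_set n)).
by rewrite e => /disjointFr /(_ un); rewrite un.
Qed.

Definition blockers : {set seg} := [set blocker m | m : 'I_4].

Lemma card_blockers : #|blockers| = 4.
Proof. by rewrite card_imset ?card_ord //; exact: blocker_inj. Qed.

Lemma mutual_visibility_setC_blockers : mutual_visibility_set adj (~: blockers).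
Proof.
move=> x y _ _ xy; have [hxy|nxy] := classic (adj x y).
  by exists [:: y]; split; [exact: shortest_path_edge | move=> z; rewrite in_nil].
have [m hm] := exists_blocker_disjoint nxy.
have bm (s : seg) : val s \subset val x :|: val y -> adj (blocker m) s.
  by move=> sub; apply: adj_blocker; exact: disjointWr sub hm.
exists [:: blocker m; y]; split.
  apply: shortest_path_common_neighbour => //; last exact/bm/subsetUr.
  by apply: adj_sym; apply/bm/subsetUl.
by move=> z; rewrite /= inE => /eqP ->; rewrite inE negbK; apply/imsetP; exists m.
Qed.

Lemma seg_of_cherry_neq c e1 e2 (ce1 : c != e1) (ce2 : c != e2) : e1 != e2 ->
  seg_of ce1 <> seg_of ce2.
Proof.
by move=> e12 /(congr1 val)/setP/(_ e1); rewrite !inE eqxx orbT eq_sym (negPf ce1) (negPf e12).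
Qed.

Lemma cherry_not_visible (U : {set seg}) c e1 e2 (ce1 : c != e1) (ce2 : c != e2) : e1 != e2 ->
  (forall z : seg, z \notin U -> ~~ [disjoint val z & [set c; e1; e2]]) ->
  ~ mutually_visible adj U (seg_of ce1) (seg_of ce2).
Proof.
move=> e12 touch [s [sp sint]].
have cS : c \in [set c; e1; e2] by rewrite !inE eqxx.
have e1S : e1 \in [set c; e1; e2] by rewrite !inE eqxx orbT.
have e2S : e2 \in [set c; e1; e2] by rewrite !inE eqxx !orbT.
have [m hm] : exists m, [disjoint blocker_set m & [set c; e1; e2]].
  apply: exists_blocker_disjoint_card3.
  by rewrite -setUA cardsU1 cards2; case: (_ \notin _); case: (_ != _).
have adj_m u v (uv : u != v) : u \in [set c; e1; e2] -> v \in [set c; e1; e2] ->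
    adj (blocker m) (seg_of uv).
  by move=> uS vS; apply/adj_blocker/(disjointWr _ hm); rewrite subUset !sub1set uS vS.
have nxy : ~ adj (seg_of ce1) (seg_of ce2) by apply: (@not_adj_of_common _ _ c); rewrite !inE eqxx.
have [z [sz xz zy]] := shortest_path_dist2 (seg_of_cherry_neq e12) nxy
  (adj_sym (adj_m _ _ ce1 cS e1S)) (adj_m _ _ ce2 cS e2S) sp.
have /touch : z \notin U by apply: sint; rewrite sz inE.
rewrite -setI_eq0 => /set0Pn [u /setIP [uz]]; rewrite !inE -orbA => /or3P [] /eqP eu; subst u.
- by apply: not_adj_of_common _ uz xz; rewrite !inE eqxx.
- by apply: not_adj_of_common _ uz xz; rewrite !inE eqxx orbT.
- by apply: not_adj_of_common uz _ zy; rewrite !inE eqxx orbT.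
Qed.

Lemma card_mutual_visibility_set_le U : mutual_visibility_set adj U ->
  (#|U| <= 'C(p + q, 2) - 4)%N.
Proof.
move=> mvU; rewrite leqNgt; apply/negP => big.
have : (#|~: U| <= 3)%N by have := cardsC U; rewrite card_segment_v; lia.
case/(subset_set3_of_card_le3 (blocker ord0)) => w1 [w2 [w3 /subsetP sub]].
have T6 : (6 < #|T|)%N by rewrite card_sum !card_ord; lia.
have [c [e1 [e2 [ce1 ce2 e12 hw]]]] :=
  exists_cherry (eqP (valP w1)) (eqP (valP w2)) (eqP (valP w3)) T6.
have out (z : seg) : z \notin U ->
    [/\ z != seg_of ce1, z != seg_of ce2 & ~~ [disjoint val z & [set c; e1; e2]]].
  move=> zU; have : val z \in [:: val w1; val w2; val w3].
    by move: (sub z); rewrite !inE zU -orbA => /(_ isT) /or3P [] /eqP ->; rewrite eqxx ?orbT.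
  by case/hw.
apply: (cherry_not_visible e12 (fun z zU => let: And3 _ _ h := out z zU in h)).
apply: mvU (seg_of_cherry_neq e12); apply/negPn/negP => /out []; rewrite eqxx //.
Qed.
End DoubleChainSegments.

Theorem proposition6 (R : realType) (p q : nat)
    (a : 'I_p -> point R) (b : 'I_q -> point R) :
  (3 <= p)%N -> (6 <= q)%N ->
  is_double_chain a b -> general_position a b ->
  mu_eq (disj_adj a b) ('C(p + q, 2) - 4).
Proof.
(* Points on the two arcs are automatically in general position. *)
move=> p3 q6 chain _; have p1 : (1 < p)%N by apply: leq_trans p3.
split; last by move=> U; exact: card_mutual_visibility_set_le.
exists (~: blockers chain p1 q6); split; first exact: mutual_visibility_setC_blockers.
by have := cardsC (blockers chain p1 q6); rewrite card_blockers card_segment_v; lia.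
Qed.
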